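(* Let $L\subset\mathbb{Z}^m$ be a non-zero lattice with $L\cap\mathbb{N}^m=\{\mathbf 0\}$ and $\mathrm{Sat}(L)=\ker_{\mathbb{Z}}(\mathcal{A})$. Then $\mathcal{T}_{\min}=\mathcal{C}_{\min}$.
   Context: $K$ is a field, $\mathbf x^{\mathbf u}=x_1^{u_1}\cdots x_m^{u_m}$, $\mathbf u_\pm$ are the positive/negative parts of $\mathbf u\in\mathbb{Z}^m$, $I_L=(\mathbf x^{\mathbf u_+}-\mathbf x^{\mathbf u_-}:\mathbf u\in L)\subset K[x_1,\ldots,x_m]$, $\mathrm{Sat}(L)=\{\mathbf u:d\mathbf u\in L\text{ for some nonzero }d\in\mathbb{Z}\}$, $\mathcal{A}=\{\mathbf a_1,\ldots,\mathbf a_m\}\subset\mathbb{Z}^n$ and $\ker_{\mathbb{Z}}(\mathcal{A})=\{\mathbf q\in\mathbb{Z}^m:\sum q_i\mathbf a_i=0\}$. A circuit of $\mathcal{A}$ is a nonzero $\mathbf u\in\ker_{\mathbb{Z}}(\mathcal{A})$ with inclusion-minimal support $\mathrm{supp}(\mathbf u)=\{i:u_i\neq0\}$ among nonzero vectors of $\ker_{\mathbb{Z}}(\mathcal{A})$ and relatively prime coordinates. $\mathcal{C}$ is the set of all $E\subseteq\{1,\ldots,m\}$ with $E=\mathrm{supp}(\mathbf u_+)$ or $E=\mathrm{supp}(\mathbf u_-)$ for some circuit $\mathbf u$, and $\mathcal{C}_{\min}$ its inclusion-minimal elements. A monomial $M$ is indispensable of $I_L$ if every system of binomial generators of $I_L$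 contains a binomial having $M$ as a monomial; $\mathcal{T}_{\min}$ is the set of inclusion-minimal elements among the supports of indispensable monomials of $I_L$ (with $\mathrm{supp}(\mathbf x^{\mathbf w})=\mathrm{supp}(\mathbf w)$). *)

From HB Require Import structures.
From mathcomp Require Import all_boot all_order all_algebra.
From mathcomp Require Import mpoly.
Set Implicit Arguments. Unset Strict Implicit. Unset Printing Implicit Defensive.
Import Order.TTheory GRing.Theory Num.Theory.
Local Open Scope ring_scope.

(* Vectors of Z^m are row vectors 'rV[int]_m; the i-th coordinate of u is u ord0 i. *)

Definition pos_part (z : int) : nat := match z with Posz n => n | Negz _ => 0%N end.
Definition neg_part (z : int) : nat := match z with Posz _ => 0%N | Negz n => n.+1 end.

Definition upos m (u : 'rV[int]_m) : 'X_{1..m} := [multinom pos_part (u ord0 i) | i < m].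
Definition uneg m (u : 'rV[int]_m) : 'X_{1..m} := [multinom neg_part (u ord0 i) | i < m].

Definition suppZ m (u : 'rV[int]_m) : {set 'I_m} := [set i | u ord0 i != 0].
Definition suppM m (w : 'X_{1..m}) : {set 'I_m} := [set i | w i != 0%N].

Definition in_ideal (K : fieldType) m (S : {mpoly K[m]} -> Prop) (p : {mpoly K[m]}) : Prop :=
  exists (k : nat) (c g : 'I_k -> {mpoly K[m]}),
    (forall j, S (g j)) /\ p = \sum_(j < k) c j * g j.

Definition lattice_gens (K : fieldType) m (L : {pred 'rV[int]_m}) (f : {mpoly K[m]}) : Prop :=
  exists2 u, u \in L & f = 'X_[upos u] - 'X_[uneg u].
Definition I_L (K : fieldType) m (L : {pred 'rV[int]_m}) : {mpoly K[m]} -> Prop :=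
  in_ideal (@lattice_gens K m L).

Definition is_binomial (K : fieldType) m (f : {mpoly K[m]}) : Prop :=
  exists a b : 'X_{1..m}, a != b /\ f = 'X_[a] - 'X_[b].
Definition has_monomial (K : fieldType) m (f : {mpoly K[m]}) (w : 'X_{1..m}) : Prop :=
  exists a b : 'X_{1..m}, a != b /\ f = 'X_[a] - 'X_[b] /\ (w = a \/ w = b).

Definition binomial_generating_system (K : fieldType) m
    (I G : {mpoly K[m]} -> Prop) : Prop :=
  (forall f, G f -> is_binomial f) /\ (forall p, in_ideal G p <-> I p).

Definition indispensable_monomial (K : fieldType) m (L : {pred 'rV[int]_m})
    (w : 'X_{1..m}) : Prop :=
  forall G : {mpoly K[m]} -> Prop, binomial_generating_system (@I_L K m L) G ->
    exists f, G f /\ has_monomial f w.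

(* Sat(L) and ker_Z(A); A is the m x n integer matrix whose rows are a_1..a_m *)
Definition Sat m (L : {pred 'rV[int]_m}) (u : 'rV[int]_m) : Prop :=
  exists2 d : int, d != 0 & d *: u \in L.
Definition kerZ m n (A : 'M[int]_(m, n)) (q : 'rV[int]_m) : Prop := q *m A = 0.

Definition circuit m n (A : 'M[int]_(m, n)) (u : 'rV[int]_m) : Prop :=
  [/\ kerZ A u, u != 0,
      (forall v, kerZ A v -> v != 0 -> ~ (suppZ v \proper suppZ u)) &
      (\big[gcdn/0%N]_(i < m) `|u ord0 i|%N = 1%N)].

Definition Cfam m n (A : 'M[int]_(m, n)) (E : {set 'I_m}) : Prop :=
  exists2 u, circuit A u & (E = suppM (upos u) \/ E = suppM (uneg u)).
Definition Tfam (K : fieldType) m (L : {pred 'rV[int]_m}) (E : {set 'I_m}) : Prop :=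
  exists2 w, indispensable_monomial K L w & E = suppM w.
Definition minimal_elts m (F : {set 'I_m} -> Prop) (E : {set 'I_m}) : Prop :=
  F E /\ forall E', F E' -> ~ (E' \proper E).

From mathcomp Require Import all_boot all_order all_algebra.
From mathcomp Require Import mpoly.
From mathcomp Require Import zify.
From Stdlib Require Import Classical.
Set Implicit Arguments. Unset Strict Implicit. Unset Printing Implicit Defensive.
Import Order.TTheory GRing.Theory Num.Theory.
Local Open Scope ring_scope.

(* Both families are squeezed against the family Q of supports supp(v_+) of
   nonzero vectors v of L: each of T and C is contained in Q, and every member
   of Q contains a member of T and a member of C, so all three have the same
   minimal elements.
   For T, note that x^{v_+} - x^{v_-} generates I_L, and that a monomial x^a which
   is divisibility-minimal among the monomials of nontrivial binomials of I_L must
   occur in every binomial generating system: expanding x^a - x^b in the system,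
   some generator x^c - x^d has c or d dividing a.
   For C, every nonzero vector of ker(A) has a circuit conformal to it: while
   the support is not minimal, a vector with smaller support is eliminated
   against it without changing signs. *)

Section MinimalElements.
Variable m : nat.
Implicit Types (F G : {set 'I_m} -> Prop) (E : {set 'I_m}).

Lemma minimal_elts_coinitial F G :
  (forall E, F E -> G E) -> (forall E, G E -> exists2 E', F E' & E' \subset E) ->
  forall E, minimal_elts F E <-> minimal_elts G E.
Proof.
move=> FG GF E; split=> [[FE minF] | [GE minG]].
  split=> [|E' GE' ltE'E]; first exact: FG.
  have [E'' FE'' leE''E'] := GF E' GE'.
  exact: minF FE'' (sub_proper_trans leE''E' ltE'E).
have [E' FE' leE'E] := GF E GE.
have eqE'E : E' = E.
  apply/eqP; apply: contraT => neqE'E.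
  by case: (minG E' (FG E' FE')); rewrite properEneq neqE'E.
rewrite -eqE'E; split=> // E'' FE''; rewrite eqE'E; apply: minG; exact: FG.
Qed.

End MinimalElements.

Lemma pos_part_neq0 (z : int) : (pos_part z != 0%N) = (0 < z).
Proof. by case: z => [[|k]|k]. Qed.

Lemma neg_part_neq0 (z : int) : (neg_part z != 0%N) = (z < 0).
Proof. by case: z => [[|k]|k]. Qed.

Lemma in_suppM_upos m (u : 'rV[int]_m) i : (i \in suppM (upos u)) = (0 < u ord0 i).
Proof. by rewrite inE mnmE pos_part_neq0. Qed.

Lemma in_suppM_uneg m (u : 'rV[int]_m) i : (i \in suppM (uneg u)) = (u ord0 i < 0).
Proof. by rewrite inE mnmE neg_part_neq0. Qed.

Lemma suppM_uneg m (u : 'rV[int]_m) : suppM (uneg u) = suppM (upos (- u)).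
Proof. by apply/setP => i; rewrite in_suppM_upos in_suppM_uneg mxE oppr_gt0. Qed.

Lemma upos_eq_uneg m (u : 'rV[int]_m) : (upos u == uneg u) = (u == 0).
Proof.
apply/eqP/eqP => [eq_pn | ->]; last by apply/mnmP => i; rewrite !mnmE mxE.
apply/rowP => i; have := congr1 (fun w : 'X_{1..m} => w i) eq_pn.
by rewrite !mnmE mxE; case: (u ord0 i) => [[|k]|k].
Qed.

Lemma rV_neq0_entry (R : nmodType) m (v : 'rV[R]_m) : v != 0 -> exists i, v ord0 i != 0.
Proof.
case: (pickP (fun i => v ord0 i != 0)) => [i vi _ | v0]; first by exists i.
by case/eqP; apply/rowP => i; rewrite mxE; apply/eqP/negbFE/v0.
Qed.

Definition pos_supp_fam m (L : {pred 'rV[int]_m}) (E : {set 'I_m}) : Prop :=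
  exists2 v, v \in L & v != 0 /\ E = suppM (upos v).

Lemma lepm_mdeg_lt m (a b : 'X_{1..m}) : (a <= b)%MM -> a != b -> (mdeg a < mdeg b)%N.
Proof.
move=> le_ab neq_ab; rewrite -(submK le_ab) mdegD -{1}[mdeg a]add0n ltn_add2r lt0n mdeg_eq0.
by apply: contra neq_ab => /eqP ba0; rewrite -(submK le_ab) ba0 add0m.
Qed.

Lemma lepm_minimal_below m (P : 'X_{1..m} -> Prop) a : P a ->
  exists a', [/\ P a', (a' <= a)%MM & forall b, P b -> (b <= a')%MM -> b = a'].
Proof.
have [k] := ubnP (mdeg a); elim: k a => // k IH a lt_a_k Pa.
case: (classic (exists b, [/\ P b, (b <= a)%MM & b != a])) => [[b [Pb le_ba neq_ba]] | nb].
  have [a' [Pa' le_a'b min_a']] := IH b (leq_trans (lepm_mdeg_lt le_ba neq_ba) lt_a_k) Pb.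
  by exists a'; split=> //; apply: lepm_trans le_ba.
exists a; split=> [//||b Pb le_ba]; first exact: lepm_refl.
by apply: NNPP => neq_ba; apply: nb; exists b; split=> //; apply/eqP.
Qed.

Section LatticeIdeal.
Variables (K : fieldType) (m : nat).
Variable L : {pred 'rV[int]_m}.
Implicit Types (p : {mpoly K[m]}) (S : {mpoly K[m]} -> Prop).

Lemma mcoeffMX_neq0_lepm p (e t : 'X_{1..m}) : (p * 'X_[e])@_t != 0 -> (e <= t)%MM.
Proof.
rewrite -mcoeff_msupp (perm_mem (msuppMX p e)) => /mapP [t' _ ->].
exact: lem_addr.
Qed.

Lemma mcoeff_binomial (a b w : 'X_{1..m}) : a != b ->
  (('X_[a] - 'X_[b] : {mpoly K[m]})@_w != 0) = (w == a) || (w == b).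
Proof.
move=> neq_ab; rewrite mcoeffB !mcoeffX.
have [<-|_] := eqVneq a w; first by rewrite [b == a]eq_sym (negbTE neq_ab) /= subr0 oner_neq0.
by have [_|_] := eqVneq b w; rewrite /= ?subrr ?eqxx // sub0r oppr_eq0 oner_neq0.
Qed.

Lemma in_ideal_gen S p : S p -> in_ideal S p.
Proof.
by move=> Sp; exists 1%N, (fun _ => 1), (fun _ => p); rewrite big_ord1 mul1r.
Qed.

Lemma in_idealN S p : in_ideal S p -> in_ideal S (- p).
Proof.
move=> [k [c [g [Sg ->]]]]; exists k, (fun j => - c j), g; split=> //.
by rewrite -sumrN; apply: eq_bigr => j _; rewrite mulNr.
Qed.

Lemma in_ideal_sub S S' p : (forall f, S f -> S' f) -> in_ideal S p -> in_ideal S' p.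
Proof. by move=> SS' [k [c [g [Sg ->]]]]; exists k, c, g; split=> // j; apply: SS'. Qed.

Definition nonzero_lattice_binomial (f : {mpoly K[m]}) : Prop :=
  exists2 u, u \in L & u != 0 /\ f = 'X_[upos u] - 'X_[uneg u].

Lemma nonzero_lattice_binomials_generate : (exists2 u, u \in L & u != 0) ->
  binomial_generating_system (@I_L K m L) nonzero_lattice_binomial.
Proof.
move=> [u0 Lu0 u0_neq0]; split.
  by move=> f [u Lu [u_neq0 ->]]; exists (upos u), (uneg u); rewrite upos_eq_uneg.
move=> p; split; first by apply: in_ideal_sub => f [u Lu [_ ->]]; exists u.
(* the generators with u = 0 vanish and are traded for a nonzero one *)
move=> [k [c [g [Lg ->]]]].
exists k, (fun j => if g j == 0 then 0 else c j),
  (fun j => if g j == 0 then 'X_[upos u0] - 'X_[uneg u0] else g j); split.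
  move=> j; case: eqP => [_|gj_neq0]; first by exists u0.
  have [u Lu gjE] := Lg j; exists u => //; split=> //.
  apply/eqP => u_eq0; apply: gj_neq0; rewrite gjE u_eq0.
  have /eqP -> : upos (0 : 'rV[int]_m) == uneg 0 by rewrite upos_eq_uneg.
  exact: subrr.
by apply: eq_bigr => j _; case: eqP => [->|]; rewrite ?mulr0 ?mul0r.
Qed.

Lemma Tfam_pos_supp : zmod_closed L -> (exists2 u, u \in L & u != 0) ->
  forall E, Tfam K L E -> pos_supp_fam L E.
Proof.
move=> zL L_neq0 E [w indw ->].
have [f [[u Lu [u_neq0 fE]] [a [b [neq_ab [fE' w_ab]]]]]] :=
  indw _ (nonzero_lattice_binomials_generate L_neq0).
have : f@_w != 0 by rewrite fE' mcoeff_binomial //; case: w_ab => ->; rewrite eqxx ?orbT.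
rewrite fE mcoeff_binomial ?upos_eq_uneg // => /orP [/eqP -> | /eqP ->]; first by exists u.
exists (- u); first exact: (GRing.zmod_closedN zL).
by rewrite oppr_eq0 suppM_uneg.
Qed.

Definition binomial_exponent (a : 'X_{1..m}) : Prop :=
  exists2 b, a != b & I_L L ('X_[a] - 'X_[b] : {mpoly K[m]}).

Lemma minimal_binomial_exponent_indispensable a : binomial_exponent a ->
  (forall c, binomial_exponent c -> (c <= a)%MM -> c = a) ->
  indispensable_monomial K L a.
Proof.
move=> [b neq_ab Iab] min_a G [Gbin Ggen].
have [k [c [g [Gg abE]]]] := (Ggen _).2 Iab.
have /existsP [j cgj] : [exists j, (c j * g j)@_a != 0].
  have : ('X_[a] - 'X_[b] : {mpoly K[m]})@_a != 0 by rewrite mcoeff_binomial ?eqxx.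
  apply: contraLR; rewrite negb_exists => /forallP cg0.
  by rewrite negbK abE raddf_sum big1 // => j _; apply/eqP/negPn/cg0.
have [aj [bj [neq_abj gjE]]] := Gbin _ (Gg j).
have Igj : I_L L (g j) by apply/Ggen/in_ideal_gen.
exists (g j); split=> //; exists aj, bj; do 2 split=> //.
move: cgj; rewrite gjE mulrBr mcoeffB.
have [cj_aj0|cj_aj] := eqVneq ((c j * 'X_[aj])@_a) 0.
  rewrite cj_aj0 sub0r oppr_eq0 => /mcoeffMX_neq0_lepm le_bja.
  right; apply/esym/min_a => //; exists aj; first by rewrite eq_sym.
  by rewrite -opprB -gjE; apply: in_idealN.
left; apply/esym/min_a; last exact: mcoeffMX_neq0_lepm cj_aj.
by exists bj; rewrite -?gjE.
Qed.

Lemma pos_supp_Tfam_below E : pos_supp_fam L E -> exists2 E', Tfam K L E' & E' \subset E.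
Proof.
move=> [u Lu [u_neq0 ->]].
have ex_u : binomial_exponent (upos u).
  by exists (uneg u); [rewrite upos_eq_uneg | apply: in_ideal_gen; exists u].
have [a [ex_a /mnm_lepP le_a min_a]] := lepm_minimal_below ex_u.
exists (suppM a); first by exists a => //; apply: minimal_binomial_exponent_indispensable.
by apply/subsetP => i; rewrite !inE -!lt0n => /leq_trans; apply.
Qed.

End LatticeIdeal.

Lemma ler_int_ratio (R : numFieldType) (a b c d : int) : 0 < b -> 0 < d ->
  (a%:~R / b%:~R : R) <= c%:~R / d%:~R -> a * d <= c * b.
Proof.
move=> b_gt0 d_gt0; rewrite ler_pdivrMr ?ltr0z // mulrAC ler_pdivlMr ?ltr0z //.
by rewrite -!intrM ler_int.
Qed.

(* Coordinate i of |w_k| v - |v_k| w has the sign of v_i, read with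
   (a, b, c, d) = (v_i, w_i, v_k, w_k), when k minimises |v_i| / |w_i| over the
   coordinates where v and w have the same sign. *)
Lemma elimination_coord_ge0 (a b c d : int) :
  (0 < a * b -> `|c| * `|b| <= `|a| * `|d|) -> 0 <= (`|d| * a - `|c| * b) * a.
Proof.
move=> le_ratio; case: (ltrP 0 (a * b)) => [ab_gt0|ab_le0]; last nia.
by have := le_ratio ab_gt0; nia.
Qed.

Section Circuits.
Variables (m n : nat) (A : 'M[int]_(m, n)).
Implicit Types (u v w : 'rV[int]_m).

Definition sign_conformal v u := forall i, v ord0 i != 0 -> 0 < v ord0 i * u ord0 i.

Lemma sign_conformal_refl v : sign_conformal v v.
Proof. by move=> i vi; rewrite lt0r mulf_neq0 //= -expr2 sqr_ge0. Qed.

Lemma sign_conformal_trans w v u :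
  sign_conformal v w -> sign_conformal w u -> sign_conformal v u.
Proof.
move=> vw wu i vi; have vwi := vw i vi.
have wi : w ord0 i != 0 by apply: contraTneq vwi => ->; rewrite mulr0 ltxx.
have := wu i wi; nia.
Qed.

Lemma sign_conformal_suppM_upos v u :
  sign_conformal v u -> suppM (upos v) \subset suppM (upos u).
Proof.
move=> vu; apply/subsetP => i; rewrite !in_suppM_upos => vi_gt0.
by rewrite -(pmulr_rgt0 _ vi_gt0) vu // gt_eqF.
Qed.

Lemma support_minimal_circuit v : kerZ A v -> v != 0 ->
  (forall w, kerZ A w -> w != 0 -> ~ (suppZ w \proper suppZ v)) ->
  exists2 c, circuit A c & sign_conformal c v.
Proof.
move=> kerv v_neq0 minv.
pose g := (\big[gcdn/0%N]_(i < m) `|v ord0 i|)%N.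
have g_dvd i : (g %| `|v ord0 i|)%N by rewrite /g (bigD1 i) //= dvdn_gcdl.
have [i0 vi0] := rV_neq0_entry v_neq0.
have g_gt0 : (0 < g)%N.
  by rewrite lt0n; apply: contraNneq vi0 => g0; have := g_dvd i0; rewrite g0 dvd0n absz_eq0.
have g_neq0 : g%:Z != 0 by rewrite eqz_nat -lt0n.
have [c vE] : exists c : 'rV[int]_m, v = g%:Z *: c.
  exists (\row_i (v ord0 i %/ g%:Z)%Z).
  by apply/rowP => i; rewrite !mxE mulrC divzK // dvdzE absz_nat.
have c_neq0 : c != 0 by apply: contraNneq v_neq0 => c0; rewrite vE c0 scaler0.
have suppc : suppZ c = suppZ v.
  by apply/setP => i; rewrite !inE vE mxE mulf_eq0 negb_or g_neq0.
exists c; last first.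
  by move=> i ci; rewrite vE mxE mulrCA pmulr_rgt0 ?ltz_nat // sign_conformal_refl.
split=> //; last first.
- apply/eqP; rewrite -(eqn_pmul2r g_gt0) mul1n; apply/eqP.
  rewrite (big_morph (muln^~ g) (id1 := 0%N) (op1 := gcdn)) //.
    by apply: eq_bigr => i _; rewrite vE mxE abszM absz_nat mulnC.
  by move=> x y; rewrite muln_gcdl.
- by rewrite suppc.
- move: kerv; rewrite /kerZ vE -scalemxAl => /eqP.
  by rewrite scalemx_eq0 (negbTE g_neq0) => /eqP.
Qed.

Lemma kernel_support_reduction v w : kerZ A v -> kerZ A w ->
  suppZ w \proper suppZ v -> (exists i, 0 < v ord0 i * w ord0 i) ->
  exists v', [/\ kerZ A v', v' != 0, sign_conformal v' v & (#|suppZ v'| < #|suppZ v|)%N].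
Proof.
move=> kerv kerw ltwv [i0 vwi0].
have w_sub_v i : v ord0 i = 0 -> w ord0 i = 0.
  move=> vi0; have /implyP := subsetP (proper_sub ltwv) i.
  by rewrite !inE vi0 eqxx implybF negbK => /eqP.
have norm_gt0 i : 0 < v ord0 i * w ord0 i -> 0 < `|v ord0 i| /\ 0 < `|w ord0 i|.
  by rewrite !normr_gt0 => vwi; apply/andP; rewrite -negb_or -mulf_eq0 gt_eqF.
pose ratio i := (`|v ord0 i|%:~R / `|w ord0 i|%:~R : rat).
case: (arg_minP ratio (vwi0 : (fun i => 0 < v ord0 i * w ord0 i) i0)) => k vwk min_k.
have le_ratio i : 0 < v ord0 i * w ord0 i ->
    `|v ord0 k| * `|w ord0 i| <= `|v ord0 i| * `|w ord0 k|.
  move=> vwi; have [_ wk_gt0] := norm_gt0 k vwk; have [_ wi_gt0] := norm_gt0 i vwi.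
  exact: ler_int_ratio wk_gt0 wi_gt0 (min_k i vwi).
pose v' := `|w ord0 k| *: v - `|v ord0 k| *: w.
have v'E i : v' ord0 i = `|w ord0 k| * v ord0 i - `|v ord0 k| * w ord0 i by rewrite !mxE.
have v'_sub_v i : v' ord0 i != 0 -> v ord0 i != 0.
  by apply: contraNN => /eqP vi0; rewrite v'E (w_sub_v i vi0) vi0 !mulr0 subr0.
exists v'; split.
- by rewrite /kerZ mulmxBl -!scalemxAl kerv kerw !scaler0 subr0.
- apply: contraTneq ltwv => v'0; rewrite properEneq negb_and; apply/orP; left; apply/negPn.
  apply/eqP/setP => i; rewrite !inE; have := v'E i; rewrite v'0 mxE.
  have := norm_gt0 k vwk; nia.
- move=> i v'i; rewrite lt0r mulf_neq0 ?v'_sub_v //= v'E.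
  exact: elimination_coord_ge0 (le_ratio i).
- apply: proper_card; rewrite properE; apply/andP; split.
    by apply/subsetP => i; rewrite !inE; apply: v'_sub_v.
  have [vk_gt0 wk_gt0] := norm_gt0 k vwk.
  apply/subsetPn; exists k; rewrite !inE; first by rewrite -normr_gt0.
  by rewrite v'E negbK; nia.
Qed.

Lemma exists_sign_conformal_circuit v : kerZ A v -> v != 0 ->
  exists2 c, circuit A c & sign_conformal c v.
Proof.
have [N] := ubnP #|suppZ v|; elim: N v => // N IH v lt_v_N kerv v_neq0.
case: (classic (exists w, [/\ kerZ A w, w != 0 & suppZ w \proper suppZ v]));
  last by move=> minv; apply: support_minimal_circuit => // w kerw w_neq0 ltwv;
    apply: minv; exists w.
move=> [w [kerw w_neq0 ltwv]].
have [i wi] := rV_neq0_entry w_neq0.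
have vi : v ord0 i != 0 by have := subsetP (proper_sub ltwv) i; rewrite !inE; apply.
(* eliminate against w or -w, whichever agrees in sign with v at i *)
have [v' [kerv' v'_neq0 v'v lt_v'v]] : exists v', [/\ kerZ A v', v' != 0,
    sign_conformal v' v & (#|suppZ v'| < #|suppZ v|)%N].
  case: (ltrP 0 (v ord0 i * w ord0 i)) => vwi.
    by apply: kernel_support_reduction ltwv _; last exists i.
  apply: (@kernel_support_reduction _ (- w)) => //.
  - by rewrite /kerZ mulNmx kerw oppr0.
  - by rewrite (_ : suppZ (- w) = suppZ w) //; apply/setP => j; rewrite !inE mxE oppr_eq0.
  by exists i; rewrite mxE mulrN oppr_gt0 lt_neqAle vwi mulf_neq0.
have [c circ_c cv'] := IH v' (leq_trans lt_v'v lt_v_N) kerv' v'_neq0.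
by exists c => //; apply: sign_conformal_trans cv' v'v.
Qed.

Variable L : {pred 'rV[int]_m}.
Hypothesis satL : forall u, Sat L u <-> kerZ A u.

Lemma pos_supp_Cfam_below E : pos_supp_fam L E -> exists2 E', Cfam A E' & E' \subset E.
Proof.
move=> [u Lu [u_neq0 ->]].
have keru : kerZ A u by apply/satL; exists 1; rewrite ?oner_eq0 ?scale1r.
have [c circ_c cu] := exists_sign_conformal_circuit keru u_neq0.
by exists (suppM (upos c)); [exists c; last left | apply: sign_conformal_suppM_upos].
Qed.

Lemma Cfam_pos_supp : zmod_closed L -> forall E, Cfam A E -> pos_supp_fam L E.
Proof.
move=> zL E [c [kerc c_neq0 _ _] Ec].
have [d d_neq0 Ldc] := (satL c).2 kerc.
have d_gt0 : 0 < `|d| by rewrite normr_gt0.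
have Lc : `|d| *: c \in L /\ `|d| *: - c \in L.
  rewrite scalerN; case: (ltrP 0 d) => [d_pos|d_le0].
    by rewrite gtr0_norm //; split; last apply: (GRing.zmod_closedN zL).
  rewrite ler0_norm // scaleNr opprK; split=> //; exact: (GRing.zmod_closedN zL).
have suppM_scale (s : 'rV[int]_m) : suppM (upos (`|d| *: s)) = suppM (upos s).
  by apply/setP => i; rewrite !in_suppM_upos mxE pmulr_rgt0.
have scale_neq0 (s : 'rV[int]_m) : s != 0 -> `|d| *: s != 0.
  by rewrite scalemx_eq0 negb_or gt_eqF.
case: Ec => ->; first by exists (`|d| *: c); rewrite ?suppM_scale ?scale_neq0; case: Lc.
exists (`|d| *: - c); first by case: Lc.
by rewrite suppM_scale suppM_uneg scale_neq0 ?oppr_eq0.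
Qed.

End Circuits.

Theorem proposition2p6 (K : fieldType) (m n : nat) (A : 'M[int]_(m, n))
    (L : {pred 'rV[int]_m}) :
  zmod_closed L ->
  (exists2 u, u \in L & u != 0) ->
  (forall u, u \in L -> (forall i, 0 <= u ord0 i) -> u = 0) ->
  (forall u, Sat L u <-> kerZ A u) ->
  forall E : {set 'I_m}, minimal_elts (Tfam K L) E <-> minimal_elts (Cfam A) E.
Proof.
move=> zL L_neq0 _ satL E.
rewrite (minimal_elts_coinitial (Tfam_pos_supp zL L_neq0) (@pos_supp_Tfam_below K m L)).
by rewrite (minimal_elts_coinitial (Cfam_pos_supp satL zL) (pos_supp_Cfam_below satL)).
Qed.
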